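(* There is an absolute constant $a_2>0$ such that for all integers $k\ge 80$, $n\ge 2k$ and every positive integer $m\le\frac{\ln k}{4}$, $$\int_{[0,n]^m}\psi\Big(\max_{i\in[m]}x_i-\frac1k\Big)\,dx\le 1+\frac{a_2^m}{k},$$ where $\psi(\gamma)=1$ for $\gamma<1$, $\psi(\gamma)=\frac2k$ for $\gamma\in[1,50]$, and $\psi(\gamma)=4k\,e^{-\frac{\gamma}{20}\ln k}$ for $\gamma>50$. *)

From HB Require Import structures.
From mathcomp Require Import all_boot all_order all_algebra.
From mathcomp Require Import all_classical all_reals all_analysis.
From mathcomp Require Import Rstruct Rstruct_topology.
From Stdlib Require Import Rdefinitions.
Set Implicit Arguments. Unset Strict Implicit. Unset Printing Implicit Defensive.
Import Order.TTheory GRing.Theory Num.Theory.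
Local Open Scope classical_set_scope.
Local Open Scope ring_scope.

Definition psi (k : nat) (g : R) : R :=
  if g < 1 then 1
  else if g <= 50 then 2 / k%:R
  else 4 * k%:R * expR (- (g / 20) * ln (k%:R)).

Definition scons (t : R) (x : nat -> R) : nat -> R :=
  fun i => if i is i'.+1 then x i' else t.

(* iterated Lebesgue integral over [0,n]^m of f (which only depends on the
   first m coordinates):  int_0^n ... int_0^n f(x_0,...,x_{m-1}) dx *)
Fixpoint cube_int (m : nat) (n : R) (f : (nat -> R) -> \bar R) : \bar R :=
  match m with
  | 0 => f (fun _ => 0)
  | m'.+1 => (\int[@lebesgue_measure R]_(t in `[(0:R), n]%classic) cube_int m' n (fun x => f (scons t x)))%E
  end.

(* max_{i in [m]} x_i  (for m >= 1; x 0 is one of the x_i) *)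
Definition maxm (m : nat) (x : nat -> R) : R :=
  \big[Num.max/x 0%N]_(i < m) x i.

From HB Require Import structures.
From mathcomp Require Import all_boot all_order all_algebra.
From mathcomp Require Import all_classical all_reals all_analysis.
From mathcomp Require Import Rstruct Rstruct_topology.
From Stdlib Require Import Rdefinitions.
From mathcomp Require Import measurable_realfun exponential_distribution.
From mathcomp Require Import ring lra.
Import Order.TTheory GRing.Theory Num.Theory.
Local Open Scope classical_set_scope.
Local Open Scope ring_scope.

(* Write M = max_i x_i, g = M - 1/k and L = ln k.  On the
   nonnegative orthant, psi_k(g) is dominated pointwise by
        prod_i 1[x_i < 1 + 1/k]  +  (1/k) prod_i w(x_i),
   where w(t) = 6 e^{(51-t)/5} = K * (density of Exp(1/5) at t) with
   K = 30 e^{51/5}:  for g < 1 the first product equals 1; for 1 <= g <= 50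
   every x_i <= 51, so w(x_i) >= 6; for g > 50 the tail e^{-gL/20} is beaten
   by e^{m(51-M)/5} because m <= L/4.  Both terms are products of functions of
   one variable, so the iterated integral over [0,n]^m is at most
   (1 + 1/k)^m + K^m/k.  Convexity gives (1 + 1/k)^m <= 1 + (2^m - 1)/k, and
   2^m + K^m <= (2K)^m, so the constant a2 = 2K works.  The integrand of the
   iterated integral is not known to be measurable, so comparisons of
   integrals only use monotonicity of the integral of nonnegative functions,
   which holds without measurability. *)

Lemma ge0_le_integral_nonmeasurable d (T : measurableType d) (R : realType)
    (mu : {measure set T -> \bar R}) (D : set T) (f g : T -> \bar R) :
  (forall x, D x -> (0 <= f x)%E) -> (forall x, D x -> (f x <= g x)%E) ->
  (\int[mu]_(x in D) f x <= \int[mu]_(x in D) g x)%E.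
Proof.
move=> f0 fg.
have g0 x : D x -> (0 <= g x)%E by move=> Dx; exact: le_trans (f0 x Dx) (fg x Dx).
rewrite (ge0_integralE mu f0) (ge0_integralE mu g0) /=.
apply: ereal_sup_le => _ [h hf <-]; exists h => //= x.
apply: le_trans (hf x) _; rewrite /patch; case: ifP => // /[1!inE] Dx.
exact: fg.
Qed.

Lemma cube_int_ge0 (n : R) m (f : (nat -> R) -> \bar R) :
  (forall x, 0 <= f x)%E -> (0 <= cube_int m n f)%E.
Proof.
elim: m f => [|m IH] f f0 /=; first exact: f0.
by apply: integral_ge0 => t _; apply: IH.
Qed.

Lemma integral_scale_le (n a r : R) (u : R -> R) : 0 <= a ->
  (forall t, 0 <= u t) -> measurable_fun (T:=(R:realType)) (U:=(R:realType)) setT u ->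
  (\int[@lebesgue_measure R]_(t in `[(0:R), n]) (u t)%:E <= r%:E)%E ->
  (\int[@lebesgue_measure R]_(t in `[(0:R), n]) (a * u t)%:E <= (a * r)%:E)%E.
Proof.
move=> a0 u0 mble_u int_u.
under eq_integral do rewrite EFinM.
rewrite ge0_integralZl_EFin //; last 2 first.
- by move=> t _; rewrite lee_fin.
- by apply/measurable_EFinP; exact: measurable_funTS.
by rewrite EFinM lee_wpmul2l // lee_fin.
Qed.

Section iterated_integral_of_product_majorants.
Variables (n ru rv : R) (u v : R -> R).
Hypotheses (u0 : forall t, 0 <= u t) (v0 : forall t, 0 <= v t).
Hypothesis mble_u : measurable_fun (T:=(R:realType)) (U:=(R:realType)) setT u.
Hypothesis mble_v : measurable_fun (T:=(R:realType)) (U:=(R:realType)) setT v.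
Hypothesis int_u : (\int[@lebesgue_measure R]_(t in `[(0:R), n]) (u t)%:E <= ru%:E)%E.
Hypothesis int_v : (\int[@lebesgue_measure R]_(t in `[(0:R), n]) (v t)%:E <= rv%:E)%E.

Lemma integral_combination_le a b : 0 <= a -> 0 <= b ->
  (\int[@lebesgue_measure R]_(t in `[(0:R), n]) (a * u t + b * v t)%:E
     <= (a * ru + b * rv)%:E)%E.
Proof.
move=> a0 b0.
have mD : measurable (`[(0:R), n] : set (measurableTypeR R)) by [].
under eq_integral do rewrite EFinD.
rewrite ge0_integralD // ?EFinD; last 4 first.
- by move=> t _; rewrite lee_fin mulr_ge0.
- by apply/measurable_EFinP; apply: measurable_funM => //; exact: measurable_funTS.
- by move=> t _; rewrite lee_fin mulr_ge0.
- by apply/measurable_EFinP; apply: measurable_funM => //; exact: measurable_funTS.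
by apply: leeD; exact: integral_scale_le.
Qed.

Lemma cube_int_le_prod_majorant m a b (f : (nat -> R) -> \bar R) :
  0 <= a -> 0 <= b -> (forall x, 0 <= f x)%E ->
  (forall x, (forall i, 0 <= x i) ->
     (f x <= (a * \prod_(i < m) u (x i) + b * \prod_(i < m) v (x i))%:E)%E) ->
  (cube_int m n f <= (a * ru ^+ m + b * rv ^+ m)%:E)%E.
Proof.
elim: m a b f => [|m IH] a b f a0 b0 f0 f_le /=.
  by have := f_le (fun _ => 0) (fun _ => lexx 0); rewrite !big_ord0 !expr0.
have inner t : 0 <= t -> (cube_int m n (fun x => f (scons t x))
    <= ((a * ru ^+ m) * u t + (b * rv ^+ m) * v t)%:E)%E.
  move=> t0; rewrite mulrAC [X in _ + X]mulrAC.
  apply: IH; rewrite ?mulr_ge0 // => x x0.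
  have sx0 i : 0 <= scons t x i by case: i.
  by apply: le_trans (f_le _ sx0) _; rewrite !big_ord_recl /= !mulrA.
apply: le_trans (_ : (\int[@lebesgue_measure R]_(t in `[(0:R), n])
    ((a * ru ^+ m) * u t + (b * rv ^+ m) * v t)%:E <= _)%E).
  apply: ge0_le_integral_nonmeasurable => t; first by move=> _; exact: cube_int_ge0.
  by rewrite /= in_itv /= => /andP[t0 _]; exact: inner.
have ru0 : 0 <= ru.
  by rewrite -lee_fin; apply: le_trans int_u; apply: integral_ge0 => t _; rewrite lee_fin.
have rv0 : 0 <= rv.
  by rewrite -lee_fin; apply: le_trans int_v; apply: integral_ge0 => t _; rewrite lee_fin.
rewrite !exprSr !mulrA.
by apply: integral_combination_le; rewrite mulr_ge0 // exprn_ge0.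
Qed.

End iterated_integral_of_product_majorants.

Lemma integral_indic_lt_le (n c : R) : 0 < c ->
  (\int[@lebesgue_measure R]_(t in `[(0:R), n])
     (\1_(`]-oo, c[%classic : set R) t)%:E <= c%:E)%E.
Proof.
move=> c0; rewrite integral_indic //.
apply: (@le_trans _ _ (@lebesgue_measure R `[(0:R), c])).
  apply: le_measure.
  - by rewrite inE; apply: measurableI; exact: measurable_itv.
  - by rewrite inE; exact: measurable_itv.
  move=> t [] /=; rewrite !in_itv /= => tc /andP[t0 _].
  by rewrite t0 ltW.
by rewrite lebesgue_measure_itv /= lte_fin c0 -EFinD subr0.
Qed.

Lemma integral_exponential_pdf_le (n K rate : R) : 0 <= K -> 0 < rate ->
  (\int[@lebesgue_measure R]_(t in `[(0:R), n])
     (K * exponential_pdf rate t)%:E <= K%:E)%E.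
Proof.
move=> K0 rate0.
have pdf0 t : 0 <= exponential_pdf rate t by rewrite exponential_pdf_ge0 // ltW.
rewrite -[X in (_ <= X%:E)%E]mulr1; apply: integral_scale_le => //.
  exact: measurable_exponential_pdf.
rewrite -(integral_exponential_pdf rate0).
apply: ge0_subset_integral => //.
- by apply/measurable_EFinP; exact: measurable_exponential_pdf.
- by move=> t _; rewrite lee_fin.
Qed.

Lemma le_maxm m (x : nat -> R) (i : 'I_m) : x i <= maxm m x.
Proof. by rewrite /maxm; apply: le_bigmax (fun j : 'I_m => x j) i. Qed.

Definition core_weight (k : nat) : R -> R := \1_(`]-oo, 1 + k%:R^-1[%classic : set R).
Definition tail_mass := 30 * @expR R (51 / 5).
Definition tail_weight (t : R) := tail_mass * exponential_pdf 5^-1 t.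

(* K >= 2, which is what the final comparison 2^m + K^m <= (2K)^m needs. *)
Lemma tail_mass_ge2 : 2 <= tail_mass.
Proof.
rewrite /tail_mass; set e := expR _.
have e1 : 1 <= e by apply: le_trans _ (expR_ge1Dx _); rewrite lerDl.
lra.
Qed.

Lemma tail_weightE t : 0 <= t -> tail_weight t = 6 * expR ((51 - t) / 5).
Proof.
move=> t0; rewrite /tail_weight /tail_mass exponential_pdfE //=.
have -> : (51 - t) / 5 = 51 / 5 + (- 5^-1 * t) by field.
by rewrite exp.expRD; field.
Qed.

Lemma tail_weight_ge0 t : 0 <= tail_weight t.
Proof.
rewrite /tail_weight mulr_ge0 ?exponential_pdf_ge0 ?invr_ge0 //.
by rewrite /tail_mass mulr_ge0 // ltW // expR_gt0.
Qed.

Lemma core_weight_ge0 k t : 0 <= core_weight k t.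
Proof. by rewrite /core_weight indicE. Qed.

Lemma psi_ge0 k g : 0 <= psi k g.
Proof.
rewrite /psi; case: ifP => // _; case: ifP => _.
  by rewrite mulr_ge0 // invr_ge0.
by rewrite !mulr_ge0 // ltW // expR_gt0.
Qed.

Section pointwise_majorant.
Variables (k m : nat) (x : nat -> R) (M : R).
Hypotheses (k_ge1 : 1 <= (k%:R : R)) (m_ge1 : leq 1 m).
Hypothesis x_ge0 : forall i, 0 <= x i.
Hypothesis x_le_M : forall i : 'I_m, x i <= M.

(* Each tail weight is at least 6 e^{(51-M)/5}, hence the product is at least
   6^m e^{m(51-M)/5}. *)
Lemma prod_tail_weight_ge :
  6 ^+ m * expR (m%:R * ((51 - M) / 5)) <= \prod_(i < m) tail_weight (x i).
Proof.
rewrite expRM_natl -exprMn.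
have -> : (6 * expR ((51 - M) / 5)) ^+ m = \prod_(i < m) (6 * expR ((51 - M) / 5)).
  by rewrite prodr_const card_ord.
apply: ler_prod => i _; rewrite tail_weightE // mulr_ge0 ?expR_ge0 //=.
by rewrite ler_wpM2l // ler_expR ler_pM2r // lerD2l lerN2.
Qed.

(* Small argument: every coordinate lies below 1 + 1/k. *)
Lemma psi_majorant_small : M - k%:R^-1 < 1 -> psi k (M - k%:R^-1) <=
  \prod_(i < m) core_weight k (x i) + k%:R^-1 * \prod_(i < m) tail_weight (x i).
Proof.
move=> g1; rewrite /psi g1 big1 => [|i _].
  by rewrite lerDl mulr_ge0 ?invr_ge0 // prodr_ge0 // => i _; exact: tail_weight_ge0.
rewrite /core_weight indicE mem_set //= in_itv /=.
by have := x_le_M i; lra.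
Qed.

(* Moderate argument: every coordinate is at most 51, so w(x_i) >= 6. *)
Lemma psi_majorant_moderate : 1 <= M - k%:R^-1 -> M - k%:R^-1 <= 50 ->
  psi k (M - k%:R^-1) <=
  \prod_(i < m) core_weight k (x i) + k%:R^-1 * \prod_(i < m) tail_weight (x i).
Proof.
move=> g1 g50; rewrite /psi ltNge g1 g50 /=.
have kinv_le1 : (k%:R : R)^-1 <= 1.
  by rewrite invf_le1 ?(lt_le_trans ltr01 k_ge1).
apply: ler_wpDl; first by apply: prodr_ge0 => i _; exact: core_weight_ge0.
rewrite mulrC; apply: ler_wpM2l; first by rewrite invr_ge0.
apply: le_trans prod_tail_weight_ge; rewrite -[2]mulr1.
apply: ler_pM => //.
  by apply: le_trans _ (ler_eXnr m_ge1 _); rewrite ?ler_nat ?ler1n.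
apply: le_trans _ (expR_ge1Dx _); rewrite lerDl mulr_ge0 ?ler0n // divr_ge0 //.
lra.
Qed.

(* Large argument: the exponent of psi_k is dominated, using m <= (ln k)/4. *)
Lemma psi_majorant_large : 4 * m%:R <= ln (k%:R : R) -> 50 < M - k%:R^-1 ->
  psi k (M - k%:R^-1) <=
  \prod_(i < m) core_weight k (x i) + k%:R^-1 * \prod_(i < m) tail_weight (x i).
Proof.
move=> mL g50; have g1 : 1 <= M - k%:R^-1 by lra.
have g50' : (M - k%:R^-1 <= 50) = false by rewrite leNgt g50.
rewrite /psi ltNge g1 g50' /=.
have kpos : 0 < (k%:R : R) := lt_le_trans ltr01 k_ge1.
have kinv_le1 : (k%:R : R)^-1 <= 1 by rewrite invf_le1.
apply: ler_wpDl; first by apply: prodr_ge0 => i _; exact: core_weight_ge0.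
apply: le_trans (ler_wpM2l _ prod_tail_weight_ge); last by rewrite invr_ge0 ler0n.
have kE : (k%:R : R) = expR (ln (k%:R : R)) by rewrite lnK // posrE.
move: (ln (k%:R : R)) kE mL => L kE mL.
have exponent : L + - ((M - k%:R^-1) / 20) * L <= - L + m%:R * ((51 - M) / 5).
  have m0 : 0 <= (m%:R : R) := ler0n R m.
  have h1 : 0 <= (M - k%:R^-1 - 40) * (L - 4 * m%:R) by apply: mulr_ge0; lra.
  have h2 : 0 <= (m%:R : R) * (1 - k%:R^-1) by apply: mulr_ge0; lra.
  nra.
have tail_le : k%:R * expR (- ((M - k%:R^-1) / 20) * L)
    <= k%:R^-1 * expR (m%:R * ((51 - M) / 5)).
  by rewrite {1}kE -exp.expRD {2}kE -expRN -exp.expRD ler_expR.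
have six_m : 4 <= (6%:R : R) ^+ m.
  by apply: le_trans _ (ler_eXnr m_ge1 _); rewrite ?ler_nat ?ler1n.
rewrite -[4 * _ * _]mulrA [X in _ <= X]mulrCA.
by apply: ler_pM; rewrite ?mulr_ge0 ?expR_ge0.
Qed.

End pointwise_majorant.

Lemma psi_majorant k m x : leq 1 k -> leq 1 m ->
  m%:R <= ln (k%:R : R) / 4 -> (forall i, 0 <= x i) ->
  psi k (maxm m x - k%:R^-1) <=
    \prod_(i < m) core_weight k (x i) + k%:R^-1 * \prod_(i < m) tail_weight (x i).
Proof.
move=> k1 m1 mL x0; have x_le_max := le_maxm m x.
have k1R : 1 <= (k%:R : R) by rewrite ler1n.
have [g_lt1|] := ltP (maxm m x - k%:R^-1) 1; first exact: psi_majorant_small.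
have [g_le50 g_ge1|g_gt50 _] := leP (maxm m x - k%:R^-1) 50.
  exact: psi_majorant_moderate.
by apply: psi_majorant_large => //; lra.
Qed.

(* Convexity of t |-> (1+t)^m: below the chord on [0,1]. *)
Lemma expr1D_le_chord (t : R) m : 0 <= t -> t <= 1 ->
  (1 + t) ^+ m <= 1 + (2 ^+ m - 1) * t.
Proof.
move=> t0 t1; elim: m => [|m IH]; first by rewrite !expr0 subrr mul0r addr0.
have pow1 : 1 <= (2%:R : R) ^+ m by apply: exprn_ege1; rewrite ler1n.
have step : (1 + t) * (1 + t) ^+ m <= (1 + t) * (1 + (2 ^+ m - 1) * t).
  by apply: ler_wpM2l => //; lra.
rewrite !exprS; set y := 2 ^+ m in pow1 step *.
have tt : t * t <= t by nra.
have hq : 0 <= (y - 1) * (t - t * t) by apply: mulr_ge0; lra.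
nra.
Qed.

(* Last arithmetic step: if p <= 1 + (a-1)u (the chord bound for p = (1+u)^m,
   a = 2^m), then p + u b <= 1 + (ab) u, because a + b <= ab when a, b >= 2. *)
Lemma chord_plus_tail_le (p a b u : R) : 0 <= u -> 2 <= a -> 2 <= b ->
  p <= 1 + (a - 1) * u -> p + u * b <= 1 + a * b * u.
Proof.
move=> u0 a2 b2 chord.
have ab : a + b <= a * b by nra.
have abu : (a + b) * u <= (a * b) * u by exact: ler_wpM2r.
nra.
Qed.

Theorem mainTheorem15 :
  exists a2 : R, 0 < a2 /\
    forall k n m : nat, leq 80 k -> leq (2 * k)%N n -> leq 1 m ->
      m%:R <= ln (k%:R : R) / 4 ->
      (cube_int m n%:R (fun x => (psi k (maxm m x - k%:R^-1))%:E)
         <= (1 + a2 ^+ m / k%:R)%:E)%E.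
Proof.
have K2 := tail_mass_ge2.
exists (2 * tail_mass); split; first lra.
move=> k n m k80 _ m1 mL.
have k1 : leq 1 k by apply: leq_trans k80.
have kR : 80 <= (k%:R : R) by rewrite ler_nat.
have u0 : 0 <= (k%:R : R)^-1 by rewrite invr_ge0 ler0n.
have u1 : (k%:R : R)^-1 <= 1 by rewrite invf_le1; lra.
have mcore : measurable_fun (T:=(R:realType)) (U:=(R:realType)) setT (core_weight k).
  by apply: measurable_indic; exact: measurable_itv.
have mtail : measurable_fun (T:=(R:realType)) (U:=(R:realType)) setT tail_weight.
  by apply: measurable_funM => //; exact: measurable_exponential_pdf.
have core_len : 0 < 1 + (k%:R : R)^-1 by lra.
have mass0 : 0 <= tail_mass by lra.
have rate0 : 0 < (5%:R : R)^-1 by rewrite invr_gt0 ltr0n.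
apply: le_trans (@cube_int_le_prod_majorant n%:R _ _ _ _ (core_weight_ge0 k)
  tail_weight_ge0 mcore mtail (@integral_indic_lt_le n%:R _ core_len)
  (@integral_exponential_pdf_le n%:R _ _ mass0 rate0) m 1 k%:R^-1 _ ler01 u0 _ _) _.
- by move=> x; rewrite lee_fin psi_ge0.
- by move=> x x0; rewrite lee_fin mul1r psi_majorant.
rewrite lee_fin mul1r [(2 * tail_mass) ^+ m]exprMn; apply: chord_plus_tail_le => //.
- by apply: le_trans (ler_eXnr m1 _); rewrite ?ler1n.
- by apply: le_trans (ler_eXnr m1 _) => //; lra.
- exact: expr1D_le_chord.
Qed.
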